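(* Let $X$ be a Dedekind complete vector lattice and let $E,T\in\mathcal{L}^r(X)$ be positive operators such that (i) $E^2=E$, (ii) $ET=TE=T$, and (iii) $E\wedge T=0$ in $\mathcal{L}^r(X)$. Let $Y=E(X)$ with the order inherited from $X$ (a Dedekind complete vector lattice). Then $T$ maps $Y$ into $Y$ and $\mathrm{id}_Y\wedge T|_Y=0$ in $\mathcal{L}^r(Y)$.
   Context: $\mathcal{L}^r(X)$ denotes the space of regular operators (differences of positive operators) on $X$, which is a Dedekind complete vector lattice under the Riesz–Kantorovich formulas when $X$ is Dedekind complete; the same for $\mathcal{L}^r(Y)$. *)

From HB Require Import structures.
From mathcomp Require Import all_boot all_order all_algebra.
From mathcomp Require Import reals.
Set Implicit Arguments. Unset Strict Implicit. Unset Printing Implicit Defensive.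
Import Order.TTheory GRing.Theory Num.Theory.
Local Open Scope ring_scope.

Section VL.
Variables (R : realType) (X : lmodType R) (le : X -> X -> Prop).

Definition ordered_vector_space : Prop :=
  [/\ (forall x, le x x),
      (forall x y, le x y -> le y x -> x = y),
      (forall x y z, le x y -> le y z -> le x z),
      (forall x y z, le x y -> le (x + z) (y + z)) &
      (forall (a : R) x y, 0 <= a -> le x y -> le (a *: x) (a *: y))].

Definition is_upper_bound (A : X -> Prop) (u : X) := forall a, A a -> le a u.

Definition is_sup (A : X -> Prop) (s : X) :=
  is_upper_bound A s /\ forall u, is_upper_bound A u -> le s u.

Definition vector_lattice : Prop :=
  ordered_vector_space /\
  forall x y, exists s, is_sup (fun z => z = x \/ z = y) s.

Definition dedekind_complete : Prop :=
  forall A : X -> Prop, (exists a, A a) -> (exists u, is_upper_bound A u) ->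
  exists s, is_sup A s.

(* An operator on P is represented by a map S : X -> X mapping P into P and
   linear on P; only its values on P matter. *)
Definition op_on (P : X -> Prop) (S : X -> X) : Prop :=
  [/\ (forall x, P x -> P (S x)),
      (forall x y, P x -> P y -> S (x + y) = S x + S y) &
      (forall (a : R) x, P x -> S (a *: x) = a *: S x)].

Definition positive_on (P : X -> Prop) (S : X -> X) : Prop :=
  op_on P S /\ forall x, P x -> le 0 x -> le 0 (S x).

Definition regular_on (P : X -> Prop) (S : X -> X) : Prop :=
  op_on P S /\ exists S1 S2, [/\ positive_on P S1, positive_on P S2 &
                               forall x, P x -> S x = S1 x - S2 x].

Definition op_le_on (P : X -> Prop) (S S' : X -> X) : Prop :=
  forall x, P x -> le 0 x -> le 0 (S' x - S x).

Definition op_inf_on (P : X -> Prop) (A B C : X -> X) : Prop :=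
  [/\ regular_on P A, regular_on P B & regular_on P C] /\
  [/\ op_le_on P C A, op_le_on P C B &
      forall S, regular_on P S -> op_le_on P S A -> op_le_on P S B ->
        op_le_on P S C].

End VL.

(* Precomposition with the positive projection E turns an operator S on
   Y = E(X) into the regular operator S \o E on X.  If S <= id_Y and
   S <= T on Y, then S \o E <= E and S \o E <= T \o E = T, hence
   S \o E <= E /\ T = 0 in L^r(X); evaluating at the points y = E y of Y
   gives S <= 0 on Y. *)
From HB Require Import structures.
From mathcomp Require Import all_boot all_order all_algebra.
From mathcomp Require Import reals.
Set Implicit Arguments. Unset Strict Implicit. Unset Printing Implicit Defensive.
Import Order.TTheory GRing.Theory Num.Theory.
Local Open Scope ring_scope.

Section OperatorsOnSubspaces.
Variables (R : realType) (X : lmodType R) (le : X -> X -> Prop).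
Hypothesis le_refl : forall x, le x x.

Local Notation whole := (fun _ : X => True).

Lemma op_on0 (P : X -> Prop) : P 0 -> op_on P (fun _ => 0).
Proof. by move=> P0; split=> [//|x y _ _|a x _]; rewrite ?addr0 ?scaler0. Qed.

Lemma op_on_sub (P Q : X -> Prop) (S : X -> X) :
  (forall x, Q x -> P x) -> (forall x, Q x -> Q (S x)) ->
  op_on P S -> op_on Q S.
Proof.
move=> QP SQ [_ SD SZ]; split=> [//|x y Qx Qy|a x Qx].
- exact: SD (QP _ Qx) (QP _ Qy).
- exact: SZ (QP _ Qx).
Qed.

Lemma op_on_map0 (P : X -> Prop) (S : X -> X) : P 0 -> op_on P S -> S 0 = 0.
Proof. by move=> P0 [_ _ SZ]; have := SZ 0 0 P0; rewrite !scale0r. Qed.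

Lemma op_on_comp (Q : X -> Prop) (S F : X -> X) :
  (forall x, Q (F x)) -> op_on Q S -> op_on whole F -> op_on whole (S \o F).
Proof.
move=> FQ [_ SD SZ] [_ FD FZ]; split=> [//|x y _ _|a x _] /=.
- by rewrite FD // SD.
- by rewrite FZ // SZ.
Qed.

Lemma positive_on_id (P : X -> Prop) : positive_on le P id.
Proof. by []. Qed.

Lemma positive_on0 (P : X -> Prop) : P 0 -> positive_on le P (fun _ => 0).
Proof. by move=> P0; split=> [|x _ _]; [exact: op_on0 | exact: le_refl]. Qed.

Lemma positive_on_sub (P Q : X -> Prop) (S : X -> X) :
  (forall x, Q x -> P x) -> (forall x, Q x -> Q (S x)) ->
  positive_on le P S -> positive_on le Q S.
Proof.
move=> QP SQ [Sop Sp]; split; first exact: op_on_sub Sop.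
by move=> x Qx; apply: Sp (QP _ Qx).
Qed.

Lemma positive_on_comp (Q : X -> Prop) (S F : X -> X) :
  (forall x, Q (F x)) -> positive_on le Q S -> positive_on le whole F ->
  positive_on le whole (S \o F).
Proof.
move=> FQ [Sop Sp] [Fop Fp]; split; first exact: op_on_comp Sop Fop.
by move=> x _ x_ge0; apply: Sp => //; apply: Fp.
Qed.

Lemma positive_on_regular (P : X -> Prop) (S : X -> X) :
  P 0 -> positive_on le P S -> regular_on le P S.
Proof.
move=> P0 Spos; split; first by case: Spos.
exists S, (fun _ => 0); split=> //; first exact: positive_on0.
by move=> x _; rewrite subr0.
Qed.

Lemma regular_on_comp (Q : X -> Prop) (S F : X -> X) :
  (forall x, Q (F x)) -> regular_on le Q S -> positive_on le whole F ->
  regular_on le whole (S \o F).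
Proof.
move=> FQ [Sop [S1 [S2 [S1pos S2pos SE]]]] Fpos.
split; first by apply: op_on_comp Sop _; case: Fpos.
exists (S1 \o F), (S2 \o F); split=> [||x _ /=]; last exact: SE.
- exact: positive_on_comp S1pos Fpos.
- exact: positive_on_comp S2pos Fpos.
Qed.

Lemma positive_on_op_ge0 (P : X -> Prop) (S : X -> X) :
  positive_on le P S -> op_le_on le P (fun _ => 0) S.
Proof. by move=> [_ Sp] x Px x_ge0; rewrite subr0; apply: Sp. Qed.

Lemma op_le_on_comp (Q : X -> Prop) (S S' F : X -> X) :
  (forall x, Q (F x)) -> positive_on le whole F ->
  op_le_on le Q S S' -> op_le_on le whole (S \o F) (S' \o F).
Proof. by move=> FQ [_ Fp] SS' x _ x_ge0; apply: SS' => //; apply: Fp. Qed.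

End OperatorsOnSubspaces.

Section PositiveProjection.
Variables (R : realType) (X : lmodType R) (le : X -> X -> Prop).
Hypothesis le_refl : forall x, le x x.
Variables (E T : X -> X).
Hypotheses (Epos : positive_on le (fun _ => True) E)
  (Tpos : positive_on le (fun _ => True) T).
Hypotheses (EE : forall x, E (E x) = E x)
  (ET : forall x, E (T x) = T x) (TE : forall x, T (E x) = T x).

Definition range_of (F : X -> X) (y : X) : Prop := exists x, y = F x.

Lemma range_of_map (x : X) : range_of E (E x).
Proof. by exists x. Qed.

Lemma range_of0 : range_of E 0.
Proof. by exists 0; rewrite (op_on_map0 _ Epos.1). Qed.

Lemma range_of_map_stable (y : X) : range_of E y -> range_of E (T y).
Proof. by move=> [x ->]; exists (T (E x)); rewrite ET. Qed.

Lemma positive_on_range : positive_on le (range_of E) T.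
Proof. exact: positive_on_sub range_of_map_stable Tpos. Qed.

Lemma op_inf_on_range :
  op_inf_on le (fun _ => True) E T (fun _ => 0) ->
  op_inf_on le (range_of E) id T (fun _ => 0).
Proof.
move=> [_ [_ _ inf0]].
have regular := positive_on_regular le_refl range_of0.
split; first split.
- exact: regular (positive_on_id _ _).
- exact: regular positive_on_range.
- exact: regular (positive_on0 le_refl range_of0).
split; [exact: positive_on_op_ge0 | exact: positive_on_op_ge0 positive_on_range|].
move=> S Sreg S_le_id S_le_T.
have SE_le0 : op_le_on le (fun _ => True) (S \o E) (fun _ => 0).
  apply: inf0; first exact: regular_on_comp range_of_map Sreg Epos.
  - exact: op_le_on_comp range_of_map Epos S_le_id.
  - have SE_le_TE := op_le_on_comp range_of_map Epos S_le_T.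
    by move=> x _ x_ge0; rewrite -TE; exact: SE_le_TE.
by move=> y [x ->] y_ge0; have := SE_le0 (E x) I y_ge0; rewrite /= EE.
Qed.

End PositiveProjection.

Theorem lemma4p2 (R : realType) (X : lmodType R) (le : X -> X -> Prop)
  (E T : X -> X) :
  vector_lattice le -> dedekind_complete le ->
  positive_on le (fun _ => True) E -> positive_on le (fun _ => True) T ->
  (forall x, E (E x) = E x) ->
  (forall x, E (T x) = T x) -> (forall x, T (E x) = T x) ->
  op_inf_on le (fun _ => True) E T (fun _ => 0) ->
  let Y := fun y : X => exists x, y = E x in
  (forall y, Y y -> Y (T y)) /\
  op_inf_on le Y (fun y => y) T (fun _ => 0).
Proof.
move=> [[le_refl _ _ _ _] _] _ Epos Tpos EE ET TE ETinf Y.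
split; first exact: range_of_map_stable.
exact: op_inf_on_range.
Qed.
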